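(* Let $F_1(x_0,x_1,x_2)$, $F_2(y_0,y_1,y_2)$ be homogeneous of degree $d$ such that $X: F_1(x)=F_2(y)$ in $\mathbb{P}^5(\mathbb{C})$ is smooth. If $F_1\sim F_2$, then $X$ contains exactly $|\mathrm{Aut}(F_1)|$ planes of rank $3$.
   Context: Coordinates on $\mathbb{P}^5$ are $[x_0:x_1:x_2:y_0:y_1:y_2]$. Every plane in $\mathbb{P}^5$ is given by a rank-3 system $Ax=By$ with $A,B$ complex $3\times3$ matrices; the plane is of rank $k$ if $\mathrm{rank}\,A=k$ (this does not depend on the chosen system). $F\sim G$ means there exists $g\in\mathrm{GL}_3(\mathbb{C})$ with $F(gx)=G(x)$; $\mathrm{Aut}(F)=\{g\in\mathrm{GL}_3(\mathbb{C}) : F(gx)=F(x)\}$. *)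

From HB Require Import structures.
From mathcomp Require Import all_boot all_order all_algebra.
From mathcomp Require Import mpoly complex.
From mathcomp Require Import reals.

Set Implicit Arguments.
Unset Strict Implicit.
Unset Printing Implicit Defensive.

Import Order.TTheory GRing.Theory Num.Theory.
Local Open Scope ring_scope.

Section Defs.
Variable K : fieldType.

Definition evalc (F : {mpoly K[3]}) (x : 'cV[K]_3) : K :=
  F.@[fun i => x i 0].

Definition equiv_form (F G : {mpoly K[3]}) : Prop :=
  exists g : 'M[K]_3, g \in unitmx /\ forall x, evalc F (g *m x) = evalc G x.

Definition Aut (F : {mpoly K[3]}) : Type :=
  {g : 'M[K]_3 | g \in unitmx /\ forall x, evalc F (g *m x) = evalc F x}.

Definition xpart (v : 'rV[K]_(3 + 3)) : 'cV[K]_3 := (lsubmx v)^T.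
Definition ypart (v : 'rV[K]_(3 + 3)) : 'cV[K]_3 := (rsubmx v)^T.

(* X : F1(x) = F2(y) is smooth: there is no nonzero point of C^6 on X at
   which all partial derivatives of F1(x) - F2(y) vanish; these partials are
   dF1/dx_i (x) and -dF2/dy_i (y). *)
Definition smooth_X (F1 F2 : {mpoly K[3]}) : Prop :=
  forall v : 'rV[K]_(3 + 3), v != 0 ->
    evalc F1 (xpart v) = evalc F2 (ypart v) ->
    ~ ((forall i : 'I_3, evalc (F1^`M(i)) (xpart v) = 0) /\
       (forall i : 'I_3, evalc (F2^`M(i)) (ypart v) = 0)).

Definition sol_set (A B : 'M[K]_3) (v : 'rV[K]_(3 + 3)) : bool :=
  A *m xpart v == B *m ypart v.

(* U (a 3-dim linear subspace of C^6, i.e. a plane of P^5) is a plane of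
   rank 3: it is given by a rank-3 system A x = B y with rank A = 3. *)
Definition rank3_plane (U : {vspace 'rV[K]_(3 + 3)}) : Prop :=
  \dim U = 3%N /\
  exists A B : 'M[K]_3,
    \rank (row_mx A B) = 3%N /\ \rank A = 3%N /\
    forall v, (v \in U) = sol_set A B v.

Definition plane_in_X (F1 F2 : {mpoly K[3]}) (U : {vspace 'rV[K]_(3 + 3)}) : Prop :=
  forall v, v \in U -> evalc F1 (xpart v) = evalc F2 (ypart v).

Definition rank3_planes_in_X (F1 F2 : {mpoly K[3]}) : Type :=
  {U : {vspace 'rV[K]_(3 + 3)} | rank3_plane U /\ plane_in_X F1 F2 U}.

End Defs.

From HB Require Import structures.
From mathcomp Require Import all_boot all_order all_algebra.
From mathcomp Require Import mpoly complex.
From mathcomp Require Import reals.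
From mathcomp Require Import boolp classical_sets functions cardinality.

Set Implicit Arguments.
Unset Strict Implicit.
Unset Printing Implicit Defensive.

Import Order.TTheory GRing.Theory Num.Theory.
Local Open Scope ring_scope.

(* A plane of rank 3 is the graph {(My, y)} of a unique matrix M, and it
   lies on X iff F1(My) = F2(y); call such an M a pullback.  Writing
   F2(y) = F1(g0 y) with g0 invertible, g |-> g g0 embeds Aut(F1) into the
   pullbacks.  Conversely, for d >= 2 every pullback M is invertible: if Mv = 0
   with v <> 0, then (0, v) is a singular point of X, since the partials of F1
   vanish at 0 and F2(v + t e_i) = t^d F1(M e_i) has zero t-derivative at 0; so
   M |-> M g0^-1 embeds the pullbacks into Aut(F1).  For d = 1 both sets are
   infinite and the pullbacks are embedded into Aut(F1) by an explicit LU-type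
   matrix whose pivots are kept nonzero by a Hilbert-hotel shift of the field;
   d = 0 contradicts smoothness.  Cantor-Bernstein turns the two embeddings
   into a bijection. *)

Lemma card_setT_le_inj (T U : Type) (f : T -> U) :
  injective f -> (@setT T #<= @setT U)%card.
Proof.
move=> finj; have /Pinj[i _] : {in setT &, injective f} by move=> x y _ _ /finj.
exact/inj_card_le/[injfun of totalfun i].
Qed.

Lemma Cantor_Bernstein_inj (T U : Type) (f : T -> U) (g : U -> T) :
  injective f -> injective g -> exists h : T -> U, bijective h.
Proof.
move=> /card_setT_le_inj TU /card_setT_le_inj UT.
have /card_bijP[h hbij] := Cantor_Bernstein TU UT.
have to_setTK (V : Type) : cancel val (@to_setT V) by move=> x; apply: val_inj.
exists (val \o h \o @to_setT T).
by apply: bij_comp; [apply: bij_comp => //; exists to_setT | exists val].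
Qed.

Lemma sval_inj (T : Type) (P : T -> Prop) : injective (@sval T P).
Proof. by move=> [x Px] [y Py] /= xy; apply: eq_exist. Qed.

Lemma poly_horner_inj (K : numDomainType) (p q : {poly K}) :
  (forall t, p.[t] = q.[t]) -> p = q.
Proof.
move=> pq; apply/eqP; rewrite -subr_eq0; apply/eqP.
apply: (@roots_geq_poly_eq0 _ _ [seq k%:R | k <- iota 0 (size (p - q))]).
- by apply/allP => _ /mapP[k _ ->]; rewrite /root hornerD hornerN pq subrr.
- by rewrite map_inj_uniq ?iota_uniq // => k l /eqP; rewrite eqr_nat => /eqP.
- by rewrite size_map size_iota.
Qed.

Section LineRestriction.
Variables (K : comNzRingType) (n : nat).
Implicit Types (p q : {mpoly K[n]}) (y : 'I_n -> K).

Definition mline p y (i : 'I_n) : {poly K} :=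
  mmap polyC (fun j => (y j)%:P + (j == i)%:R *: 'X) p.

Lemma horner_mline p y i t :
  (mline p y i).[t] = p.@[fun j => y j + (j == i)%:R * t].
Proof.
rewrite /mline /mmap mevalE horner_sum; apply: eq_bigr => m _.
rewrite hornerM hornerC /mmap1 horner_prod; congr (_ * _).
apply: eq_bigr => j _.
by rewrite horner_exp hornerD hornerC hornerZ hornerX.
Qed.

Lemma horner0_mline p y i : (mline p y i).[0] = p.@[y].
Proof. by rewrite horner_mline; apply: meval_eq => j; rewrite mulr0 addr0. Qed.

Lemma deriv_mline p y i : (mline p y i)^`() = mline p^`M(i) y i.
Proof.
pose P q := (mline q y i)^`() = mline q^`M(i) y i.
have P1 : P 1 by rewrite /P /mline rmorph1 mderivC -polyC1 derivC mmapC.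
have PM q r : P q -> P r -> P (q * r).
  by rewrite /P /mline => Pq Pr; rewrite rmorphM derivM Pq Pr mderivM rmorphD !rmorphM.
have PX j : P 'X_j.
  rewrite /P /mline mmapX mmap1U derivD derivC add0r derivZ derivX mderivX.
  rewrite mnm1E mmapZ; have [->|_] := eqVneq j i; last by rewrite !scale0r rmorph0 mul0r.
  have -> : (U_(i) - U_(i) = 0)%MM by apply/mnmP => k; rewrite mnmBE subnn mnm0E.
  by rewrite mmapX mmap11 alg_polyC mulr1.
elim/mpolyind: p => [|c m p _ _ IH].
  by rewrite /P /mline mmap0 deriv0 mderiv0 mmap0.
rewrite /P mderivD /mline !mmapD derivD IH mderivZ !mmapZ deriv_mulC.
congr (_ * _ + _); rewrite -/(P 'X_[m]) mpolyXE_id.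
apply: (big_ind P P1 PM) => j _; elim: (m j) => [|k IHk]; first by rewrite expr0.
by rewrite exprS; apply: PM.
Qed.

End LineRestriction.

Lemma meval_mderiv_eq0 (K : numDomainType) n (p : {mpoly K[n]}) y i c d :
  (1 < d)%N -> (forall t, p.@[fun j => y j + (j == i)%:R * t] = c * t ^+ d) ->
  (p^`M(i)).@[y] = 0.
Proof.
move=> d_gt1 pline; rewrite -(horner0_mline _ _ i) -deriv_mline.
have -> : mline p y i = c *: 'X^d.
  by apply: poly_horner_inj => t; rewrite horner_mline hornerZ hornerXn.
rewrite derivZ derivXn hornerZ hornerMn hornerXn.
by rewrite expr0n -subn1 subn_eq0 leqNgt d_gt1 mul0rn mulr0.
Qed.

Lemma meval_dhomog_scale (K : comNzRingType) n d (p : {mpoly K[n]}) t x :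
  p \is d.-homog -> p.@[fun j => t * x j] = t ^+ d * p.@[x].
Proof.
move=> /dhomogP p_homog; rewrite !mevalE mulr_sumr; apply: eq_big_seq => m mp.
rewrite mulrCA; congr (_ * _); under eq_bigr do rewrite exprMn.
by rewrite big_split /= prodrXr -(p_homog m mp); congr (_ ^+ _ * _); exact/esym/mdegE.
Qed.

Lemma dhomog1E (K : comNzRingType) n (p : {mpoly K[n]}) :
  p \is 1.-homog -> p = \sum_(j < n) p@_U_(j) *: 'X_j.
Proof.
move=> p_homog; apply/mpolyP => m; rewrite raddf_sum /=.
under eq_bigr do rewrite mcoeffZ mcoeffX.
have [/mdeg1P[k /eqP ->]|m_deg] := boolP (mdeg m == 1%N).
  rewrite (bigD1 k) //= eqxx mulr1 big1 ?addr0 // => j jk.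
  by rewrite eq_mnm1 (negbTE jk) mulr0.
rewrite (dhomog_nemf_coeff p_homog m_deg) big1 // => j _.
by case: eqP => [mj|_]; [move: m_deg; rewrite -mj mdeg1 | rewrite mulr0].
Qed.

Lemma dhomog0E (K : comNzRingType) n (p : {mpoly K[n]}) :
  p \is 0.-homog -> p = (p@_0)%:MP.
Proof.
move=> p_homog; apply/mpolyP => m; rewrite mcoeffC.
have [->|m_neq0] := eqVneq m 0%MM; first by rewrite mulr1.
by rewrite mulr0 (dhomog_nemf_coeff p_homog) // mdeg_eq0.
Qed.

Section Matrices.
Variable K : fieldType.

Lemma eq_mx_cV m n (A B : 'M[K]_(m, n)) :
  (forall v : 'cV_n, A *m v = B *m v) -> A = B.
Proof. by move=> AB; apply/trmx_inj/eqP/mulmxP => u; rewrite -[u]trmxK -!trmx_mul AB. Qed.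

Lemma row_cV_ext n (u w : 'rV[K]_n) :
  (forall x : 'cV_n, (u *m x) 0 0 = (w *m x) 0 0) -> u = w.
Proof. by move=> uw; apply: eq_mx_cV => x; apply/matrixP => i j; rewrite !ord1. Qed.

Lemma nonunit_ker n (A : 'M[K]_n) :
  A \notin unitmx -> exists2 v : 'cV_n, v != 0 & A *m v = 0.
Proof.
rewrite unitmxE unitfE negbK -det_tr => /det0P[u u_neq0 uA].
by exists u^T; rewrite ?trmx_eq0 // -[A]trmxK -trmx_mul uA trmx0.
Qed.

Lemma row_unit_completion n (a : 'rV[K]_n.+1) :
  a != 0 -> exists2 Q : 'M_n.+1, Q \in unitmx & delta_mx 0 0 *m Q = a.
Proof.
move=> a_neq0; have rank_a : \rank a = 1%N.
  by apply/eqP; rewrite eqn_leq rank_leq_row lt0n mxrank_eq0.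
have := mulmx_ebase a; rewrite rank_a.
set c := col_ebase a; set R := row_ebase a => a_ebase.
have c_unit : c 0 0 \is a GRing.unit by rewrite -det_mx11 -unitmxE col_ebase_unit.
exists (c 0 0 *: R); first by rewrite unitmxZ // row_ebase_unit.
rewrite -[RHS]a_ebase [c in RHS]mx11_scalar mul_scalar_mx -scalemxAl -scalemxAr.
congr (_ *: (_ *m _)); apply/matrixP => i j; rewrite !ord1 !mxE /= andbT.
by case: j => [[|k] ?].
Qed.

End Matrices.

Section LinearForms.
Variable K : fieldType.

Definition lin_row (p : {mpoly K[3]}) : 'rV[K]_3 := \row_j p@_U_(j).

Lemma evalc_lin_row p x : p \is 1.-homog -> evalc p x = (lin_row p *m x) 0 0.
Proof.
move=> p_lin; rewrite /evalc {1}(dhomog1E p_lin) raddf_sum !mxE /=.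
by apply: eq_bigr => j _; rewrite mevalZ mevalXU mxE.
Qed.

Lemma lin_row_eq0 p : p \is 1.-homog -> lin_row p = 0 -> p = 0.
Proof.
move=> p_lin /matrixP p0; rewrite (dhomog1E p_lin) big1 // => j _.
by have := p0 0 j; rewrite !mxE => ->; rewrite scale0r.
Qed.

End LinearForms.

Section Planes.
Variable K : fieldType.
Implicit Types M N : 'M[K]_3.

Lemma xpart_row_mx (a b : 'rV[K]_3) : xpart (row_mx a b) = a^T.
Proof. by rewrite /xpart row_mxKl. Qed.

Lemma ypart_row_mx (a b : 'rV[K]_3) : ypart (row_mx a b) = b^T.
Proof. by rewrite /ypart row_mxKr. Qed.

Lemma row_mx_xypart (v : 'rV[K]_(3 + 3)) : v = row_mx (xpart v)^T (ypart v)^T.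
Proof. by rewrite !trmxK hsubmxK. Qed.

Definition graph_plane M : {vspace 'rV[K]_(3 + 3)} :=
  limg (linfun (mulmxr (row_mx M^T 1%:M))).

Lemma graph_planeE M (u : 'rV[K]_3) :
  linfun (mulmxr (row_mx M^T 1%:M)) u = row_mx (M *m u^T)^T u.
Proof. by rewrite lfunE /= mul_mx_row mulmx1 trmx_mul trmxK. Qed.

Lemma mem_graph_plane M v : (v \in graph_plane M) = (xpart v == M *m ypart v).
Proof.
apply/memv_imgP/eqP => [[u _ ->]|xv].
  by rewrite graph_planeE xpart_row_mx ypart_row_mx trmxK.
exists (ypart v)^T; rewrite ?memvf // graph_planeE trmxK -xv.
exact: row_mx_xypart.
Qed.

Lemma graph_plane_rank3 M : rank3_plane (graph_plane M).
Proof.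
split.
  rewrite limg_dim_eq ?dimvf // capfv; apply/eqP/lker0P => u w.
  by rewrite !graph_planeE => /(congr1 rsubmx); rewrite !row_mxKr.
exists 1%:M, M; split; last split; last 1 first.
- by move=> v; rewrite mem_graph_plane /sol_set mul1mx.
- apply/eqP; rewrite eqn_leq rank_leq_row /=.
  have := mxrankM_maxl (row_mx (1%:M : 'M[K]_3) M) (col_mx 1%:M 0).
  by rewrite mul_row_col mulmx0 addr0 mulmx1 mxrank1.
- exact: mxrank1.
Qed.

Lemma rank3_plane_graph U : rank3_plane U -> exists M, U = graph_plane M.
Proof.
case=> _ [A [B [_ [rank_A UAB]]]].
have A_unit : A \in unitmx by rewrite -row_free_unit /row_free rank_A.
exists (invmx A *m B); apply/vspaceP => v; rewrite UAB mem_graph_plane /sol_set.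
by rewrite -mulmxA; apply/eqP/eqP => [<-|->]; rewrite ?mulKmx ?mulKVmx.
Qed.

Lemma graph_plane_inj : injective graph_plane.
Proof.
move=> M N MN; apply: eq_mx_cV => y; apply/eqP.
have : row_mx (M *m y)^T y^T \in graph_plane M.
  by rewrite mem_graph_plane xpart_row_mx ypart_row_mx !trmxK.
by rewrite MN mem_graph_plane xpart_row_mx ypart_row_mx !trmxK.
Qed.

Variables F1 F2 : {mpoly K[3]}.

Definition pullback := {M : 'M[K]_3 | forall y, evalc F1 (M *m y) = evalc F2 y}.

Lemma plane_in_X_graph M :
  plane_in_X F1 F2 (graph_plane M) <-> forall y, evalc F1 (M *m y) = evalc F2 y.
Proof.
split=> [MX y|MF v]; last by rewrite mem_graph_plane => /eqP ->.
have := MX (row_mx (M *m y)^T y^T).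
by rewrite mem_graph_plane xpart_row_mx ypart_row_mx !trmxK eqxx; apply.
Qed.

Definition plane_mx (U : rank3_planes_in_X F1 F2) : 'M[K]_3 :=
  sval (cid (rank3_plane_graph (proj1 (svalP U)))).

Lemma plane_mxE U : sval U = graph_plane (plane_mx U).
Proof. by rewrite /plane_mx; case: cid. Qed.

Lemma plane_mx_pullback U y : evalc F1 (plane_mx U *m y) = evalc F2 y.
Proof. by move: y; apply/plane_in_X_graph; rewrite -plane_mxE; case: (svalP U). Qed.

Definition pullback_of_plane U : pullback := exist _ _ (plane_mx_pullback U).

Lemma pullback_of_plane_bij : bijective pullback_of_plane.
Proof.
have graph_X (M : pullback) : rank3_plane (graph_plane (sval M)) /\
    plane_in_X F1 F2 (graph_plane (sval M)).
  by split; [exact: graph_plane_rank3 | apply/plane_in_X_graph; case: M].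
exists (fun M : pullback => exist _ (graph_plane (sval M)) (graph_X M)) => [U|M]; apply: sval_inj => /=.
  by rewrite plane_mxE.
by apply: graph_plane_inj; rewrite -plane_mxE.
Qed.

End Planes.

Section Smoothness.
Variable K : numFieldType.
Implicit Types (F G : {mpoly K[3]}) (M : 'M[K]_3).

Lemma evalc_line F (y : 'cV[K]_3) i t :
  evalc F (y + t *: delta_mx i 0) = F.@[fun j => y j 0 + (j == i)%:R * t].
Proof. by apply: meval_eq => j; rewrite !mxE eqxx andbT mulrC. Qed.

Lemma evalc_dhomog_scale d F t (x : 'cV[K]_3) :
  F \is d.-homog -> evalc F (t *: x) = t ^+ d * evalc F x.
Proof.
by move=> F_homog; rewrite /evalc -meval_dhomog_scale //; apply: meval_eq => j; rewrite mxE.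
Qed.

Lemma mderiv_pullback_ker d F G M v i :
  (1 < d)%N -> F \is d.-homog -> (forall y, evalc F (M *m y) = evalc G y) ->
  M *m v = 0 -> evalc G^`M(i) v = 0.
Proof.
move=> d_gt1 F_homog FG Mv.
apply: (meval_mderiv_eq0 (c := evalc F (M *m delta_mx i 0)) d_gt1) => t.
rewrite -evalc_line -FG mulmxDr Mv add0r -scalemxAr mulrC.
exact: evalc_dhomog_scale.
Qed.

Lemma pullback_unitmx d F1 F2 M :
  (1 < d)%N -> F1 \is d.-homog -> smooth_X F1 F2 ->
  (forall y, evalc F1 (M *m y) = evalc F2 y) -> M \in unitmx.
Proof.
move=> d_gt1 F1_homog smooth F1F2; apply: contraT => /nonunit_ker[v v_neq0 Mv].
exfalso; apply: (smooth (row_mx 0 v^T)).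
- apply: contraNneq v_neq0 => v0.
  by rewrite -[v]trmxK -(ypart_row_mx 0) v0 /ypart linear0 trmx0.
- by rewrite xpart_row_mx ypart_row_mx trmx0 trmxK -F1F2 Mv.
rewrite xpart_row_mx ypart_row_mx trmx0 trmxK; split=> i.
- have F1F1 y : evalc F1 (1%:M *m y) = evalc F1 y by rewrite mul1mx.
  exact: mderiv_pullback_ker d_gt1 F1_homog F1F1 (mulmx0 _ _).
- exact: mderiv_pullback_ker d_gt1 F1_homog F1F2 Mv.
Qed.

Lemma smooth_X_const (c : K) : ~ smooth_X c%:MP c%:MP.
Proof.
move=> smooth; have one_neq0 : const_mx 1 != 0 :> 'rV[K]_(3 + 3).
  by apply/eqP => /matrixP/(_ 0 0); rewrite !mxE; apply/eqP; exact: oner_neq0.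
apply: (smooth _ one_neq0); first by rewrite /evalc !mevalC.
by split=> i; rewrite /evalc mderivC meval0.
Qed.

Lemma dhomog0_not_smooth F1 F2 g :
  F1 \is 0.-homog -> F2 \is 0.-homog ->
  (forall x, evalc F1 (g *m x) = evalc F2 x) -> ~ smooth_X F1 F2.
Proof.
move=> /dhomog0E F1E /dhomog0E F2E gF.
have F1F2 : F1@_0 = F2@_0 by have := gF 0; rewrite /evalc {1}F1E {1}F2E !mevalC.
rewrite F1E F2E F1F2; exact: smooth_X_const.
Qed.

End Smoothness.

Section Hotel.
Variable K : numFieldType.

Definition hotel (z : K) : K := if `[< exists n : nat, z = n%:R >] then z + 1 else z.

Lemma hotel_neq0 z : hotel z != 0.
Proof.
rewrite /hotel; case: asboolP => [[n ->]|z_nat]; first by rewrite natr1 pnatr_eq0.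
by apply: contra_notN z_nat => /eqP ->; exists 0%N.
Qed.

Lemma hotel_inj : injective hotel.
Proof.
move=> z w; rewrite /hotel.
case: asboolP => [[m ->]|z_nat]; case: asboolP => [[n ->]|w_nat] //; first exact: addIr.
- by move=> wE; case: w_nat; exists m.+1; rewrite -wE natr1.
- by move=> zE; case: z_nat; exists n.+1; rewrite zE natr1.
Qed.

Let i0 : 'I_3 := @Ordinal 3 0 isT.
Let i1 : 'I_3 := @Ordinal 3 1 isT.
Let i2 : 'I_3 := @Ordinal 3 2 isT.
Let e0 : 'rV[K]_3 := delta_mx 0 i0.

Lemma ord3P (P : 'I_3 -> Prop) : P i0 -> P i1 -> P i2 -> forall i, P i.
Proof.
move=> P0 P1 P2 [[|[|[|//]]] lt_i3].
- by rewrite (_ : Ordinal lt_i3 = i0) //; apply: val_inj.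
- by rewrite (_ : Ordinal lt_i3 = i1) //; apply: val_inj.
- by rewrite (_ : Ordinal lt_i3 = i2) //; apply: val_inj.
Qed.

(* [hotel_mx N] is an LU product with pivots 1, [hotel (N i1 i1)] and
   [hotel (N i2 i2)]; when the first row of N is e0, all entries of N can be
   read back from it. *)
Definition hotel_lower (N : 'M[K]_3) : 'M[K]_3 := \matrix_(i, j)
  match nat_of_ord i, nat_of_ord j with
  | 0, 0 => 1
  | 1, 0 => N i1 i0 | 1, 1 => hotel (N i1 i1)
  | 2, 0 => N i2 i0 | 2, 1 => N i2 i1 * hotel (N i1 i1) | 2, 2 => hotel (N i2 i2)
  | _, _ => 0
  end.

Definition hotel_upper (N : 'M[K]_3) : 'M[K]_3 := \matrix_(i, j)
  match nat_of_ord i, nat_of_ord j with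
  | 0, 0 | 1, 1 | 2, 2 => 1
  | 1, 2 => N i1 i2
  | _, _ => 0
  end.

Definition hotel_mx N := hotel_lower N *m hotel_upper N.

Lemma hotel_mx_unit N : hotel_mx N \in unitmx.
Proof.
rewrite unitmx_mul !unitmxE -[hotel_upper N]trmxK det_tr !det_trig; last 2 first.
- by apply/is_trig_mxP; apply: ord3P; apply: ord3P; rewrite !mxE.
- by apply/is_trig_mxP; apply: ord3P; apply: ord3P; rewrite !mxE.
rewrite !big_ord_recl !big_ord0 !mxE /= !mulr1 !mul1r unitr1 andbT unitfE.
by rewrite mulf_neq0 ?hotel_neq0.
Qed.

Lemma row0_hotel_mx N : row i0 (hotel_mx N) = e0.
Proof.
rewrite row_mul (_ : row i0 (hotel_lower N) = e0); last first.
  by apply/rowP; apply: ord3P; rewrite !mxE.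
by rewrite -rowE; apply/rowP; apply: ord3P; rewrite !mxE.
Qed.

Lemma hotel_mx_inj N1 N2 :
  row i0 N1 = e0 -> row i0 N2 = e0 -> hotel_mx N1 = hotel_mx N2 -> N1 = N2.
Proof.
move=> /rowP N1r /rowP N2r /matrixP E.
have {}E i j : hotel_mx N1 i j = hotel_mx N2 i j := E i j.
have E10 := E i1 i0; have E20 := E i2 i0; have E11 := E i1 i1.
have E12 := E i1 i2; have E21 := E i2 i1; have E22 := E i2 i2.
move: E10 E20 E11 E12 E21 E22; rewrite !mxE !big_ord_recl !big_ord0 !mxE /=.
rewrite ?(mulr0, mul0r, mulr1, mul1r, addr0, add0r).
move=> E10 E20 /hotel_inj E11; rewrite E11 => /(mulfI (hotel_neq0 _)) E12.
move=> /(mulIf (hotel_neq0 _)) E21; rewrite E12 E21 => /addrI/hotel_inj E22.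
apply/matrixP; apply: ord3P => j; last 2 first.
- by move: j; apply: ord3P.
- by move: j; apply: ord3P.
by have := N1r j; rewrite -N2r !mxE.
Qed.

Lemma row_stab_unit_embedding (a : 'rV[K]_3) : a != 0 ->
  exists f : 'M[K]_3 -> 'M[K]_3,
    (forall N, a *m N = a -> f N \in unitmx /\ a *m f N = a) /\
    (forall N1 N2, a *m N1 = a -> a *m N2 = a -> f N1 = f N2 -> N1 = N2).
Proof.
move=> /row_unit_completion[Q Q_unit e0Q].
have row0_conj N : a *m N = a -> row i0 (Q *m N *m invmx Q) = e0.
  by move=> aN; rewrite rowE !mulmxA e0Q aN -e0Q mulmxK.
have conj_stab H : row i0 H = e0 -> a *m (invmx Q *m H *m Q) = a.
  by rewrite rowE => e0H; rewrite -e0Q !mulmxA mulmxK // e0H.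
have conj_inj (H1 H2 : 'M[K]_3) : invmx Q *m H1 *m Q = invmx Q *m H2 *m Q -> H1 = H2.
  by move/(congr1 (fun X => Q *m X *m invmx Q)); rewrite !mulmxA mulmxV // !mul1mx !mulmxK.
exists (fun N => invmx Q *m hotel_mx (Q *m N *m invmx Q) *m Q).
split=> [N aN|N1 N2 aN1 aN2 /conj_inj].
  split; first by rewrite 2!unitmx_mul unitmx_inv Q_unit hotel_mx_unit.
  exact/conj_stab/row0_hotel_mx.
move/(hotel_mx_inj (row0_conj _ aN1) (row0_conj _ aN2)).
by move/(congr1 (fun X => invmx Q *m X *m Q)); rewrite !mulmxA mulVmx // !mul1mx !mulmxKV.
Qed.

End Hotel.

Section AutPullback.
Variables (K : numFieldType) (F1 F2 : {mpoly K[3]}) (g0 : 'M[K]_3).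
Hypotheses (g0_unit : g0 \in unitmx) (g0P : forall x, evalc F1 (g0 *m x) = evalc F2 x).

Lemma aut_pullbackP (g : Aut F1) y : evalc F1 (sval g *m g0 *m y) = evalc F2 y.
Proof. by rewrite -mulmxA (proj2 (svalP g)) g0P. Qed.

Definition pullback_of_aut (g : Aut F1) : pullback F1 F2 := exist _ _ (aut_pullbackP g).

Lemma pullback_of_aut_inj : injective pullback_of_aut.
Proof.
move=> g h /(congr1 sval) /(congr1 (mulmx^~ (invmx g0))) /=.
by rewrite !mulmxK // => /sval_inj.
Qed.

Lemma evalc_pullback_mulV (M : pullback F1 F2) x :
  evalc F1 (sval M *m invmx g0 *m x) = evalc F1 x.
Proof. by rewrite -mulmxA (svalP M) -g0P mulmxA mulmxV // mul1mx. Qed.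

Lemma pullback_to_aut_gt1 d :
  (1 < d)%N -> F1 \is d.-homog -> smooth_X F1 F2 ->
  exists k : pullback F1 F2 -> Aut F1, injective k.
Proof.
move=> d_gt1 F1_homog smooth.
have autP (M : pullback F1 F2) : sval M *m invmx g0 \in unitmx /\
    forall x, evalc F1 (sval M *m invmx g0 *m x) = evalc F1 x.
  split; last exact: evalc_pullback_mulV.
  by rewrite unitmx_mul unitmx_inv g0_unit (pullback_unitmx d_gt1 F1_homog smooth (svalP M)).
exists (fun M => exist _ (sval M *m invmx g0) (autP M)).
move=> M N /(congr1 sval) /(congr1 (mulmx^~ g0)) /=.
by rewrite !mulmxKV // => /sval_inj.
Qed.

Lemma pullback_to_aut_linear :
  F1 \is 1.-homog -> F2 \is 1.-homog -> smooth_X F1 F2 ->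
  exists k : pullback F1 F2 -> Aut F1, injective k.
Proof.
move=> F1_lin F2_lin smooth.
have lin_rowF2 : lin_row F2 = lin_row F1 *m g0.
  by apply: row_cV_ext => x; rewrite -evalc_lin_row // -g0P evalc_lin_row // mulmxA.
have a_neq0 : lin_row F1 != 0.
  apply/eqP => a0; move: smooth; rewrite (lin_row_eq0 F1_lin a0).
  rewrite (lin_row_eq0 F2_lin) ?lin_rowF2 ?a0 ?mul0mx // -mpolyC0.
  exact: smooth_X_const.
have [f [fP f_inj]] := row_stab_unit_embedding a_neq0.
have stab (M : pullback F1 F2) : lin_row F1 *m (sval M *m invmx g0) = lin_row F1.
  by apply: row_cV_ext => x; rewrite -mulmxA -!evalc_lin_row // evalc_pullback_mulV.
have autP (M : pullback F1 F2) : f (sval M *m invmx g0) \in unitmx /\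
    forall x, evalc F1 (f (sval M *m invmx g0) *m x) = evalc F1 x.
  have [f_unit f_stab] := fP _ (stab M).
  by split=> // x; rewrite !evalc_lin_row // mulmxA f_stab.
exists (fun M => exist _ (f (sval M *m invmx g0)) (autP M)) => M N /(congr1 sval) /=.
move/(f_inj _ _ (stab M) (stab N))/(congr1 (mulmx^~ g0)).
by rewrite !mulmxKV // => /sval_inj.
Qed.

Lemma pullback_to_aut d :
  F1 \is d.-homog -> F2 \is d.-homog -> smooth_X F1 F2 ->
  exists k : pullback F1 F2 -> Aut F1, injective k.
Proof.
case: d => [|[|d]] F1_homog F2_homog smooth.
- by case: (dhomog0_not_smooth F1_homog F2_homog g0P).
- exact: pullback_to_aut_linear.
- exact: pullback_to_aut_gt1 F1_homog smooth.
Qed.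

End AutPullback.

Theorem lemma2p2 (R : realType) (d : nat) (F1 F2 : {mpoly R[i][3]}) :
  F1 \is d.-homog -> F2 \is d.-homog ->
  smooth_X F1 F2 ->
  equiv_form F1 F2 ->
  exists f : rank3_planes_in_X F1 F2 -> Aut F1, bijective f.
Proof.
move=> F1_homog F2_homog smooth [g0 [g0_unit g0P]].
have [k k_inj] := pullback_to_aut g0_unit g0P F1_homog F2_homog smooth.
have [h h_bij] := Cantor_Bernstein_inj k_inj (pullback_of_aut_inj g0_unit (g0P := g0P)).
by exists (h \o @pullback_of_plane _ F1 F2); apply: bij_comp => //; exact: pullback_of_plane_bij.
Qed.
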